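(* Two unital formal multiplications $F_1,F_2$ on $V$ are similar if and only if there exists a similarity $\Phi$ on $V$ such that $F_1(\mu\otimes\nu)=\sum F_2\big(\mu_{(1)}\otimes\Phi'(\mu_{(2)}\otimes\nu)\big)$ for all $\mu,\nu\in k[V]$ (i.e. $F_1(\mathbf{x},\mathbf{y})=F_2(\mathbf{x},\Phi(\mathbf{x},\mathbf{y}))$).
   Context: $k$ is a field of characteristic $0$; $k[V]$ is the symmetric algebra of $V$ with the coalgebra structure in which elements of $V$ are primitive, counit $\epsilon$ (degree-0 projection), $\pi_V$ the projection onto $V$, Sweedler notation; $k[V]_{\ge1}$ is the sum of symmetric powers of degree $\ge1$. A unital formal multiplication on $V$ is a linear map $F\colon k[V]\otimes k[V]\to V$ with $F(\mu\otimes1)=\pi_V(\mu)=F(1\otimes\mu)$. For a linear map $\Phi\colon k[V]\otimes k[V]\to V$ with $\Phi(1\otimes 1)=0$, $\Phi'(\xi)=\sum_{n\ge0}\frac1{n!}\Phi(\xi_{(1)})\cdots\Phi(\xi_{(n)})$ is the induced coalgebra morphism to $k[V]$. A similarity is a linear map $\Phi\colon k[V]\otimes k[V]\to V$ with $\Phi|_{1\otimes k[V]}=\pi_V$ and $\Phi|_{k[V]_{\ge1}\otimes(k1\oplus V)}=0$. Two unital formal multiplications are similar if their restrictions to $k[V]\otimes V$ coincide. *)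

From HB Require Import structures.
From mathcomp Require Import all_boot all_order all_algebra.
Set Implicit Arguments. Unset Strict Implicit. Unset Printing Implicit Defensive.
Import Order.TTheory GRing.Theory Num.Theory.
Local Open Scope ring_scope.

(* Model of k[V] (symmetric algebra of V, elements of V primitive).
   A monomial v_1 v_2 ... v_n of k[V] is represented by the word
   [:: v_1; ...; v_n] : seq V ([::] is the unit 1).  Monomials span k[V],
   and a linear map k[V] (x) k[V] -> V is the same thing as a map
   F : seq V -> seq V -> V that is linear in each letter of each word and
   invariant under permutations of the letters of each word. *)

Section KV.
Variables (k : fieldType) (V : lmodType k).

Definition is_lin2 (F : seq V -> seq V -> V) : Prop :=
  [/\ (forall u1 u2 w (a : k) (x y : V),
         F (u1 ++ (a *: x + y) :: u2) w
         = a *: F (u1 ++ x :: u2) w + F (u1 ++ y :: u2) w),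
      (forall u w1 w2 (a : k) (x y : V),
         F u (w1 ++ (a *: x + y) :: w2)
         = a *: F u (w1 ++ x :: w2) + F u (w1 ++ y :: w2)),
      (forall u u' w, perm_eq u u' -> F u w = F u' w) &
      (forall u w w', perm_eq w w' -> F u w = F u w')].

Definition piV (u : seq V) : V := if u is [:: v] then v else 0.

Definition unital_fmul (F : seq V -> seq V -> V) : Prop :=
  is_lin2 F /\ (forall u, F u [::] = piV u /\ F [::] u = piV u).

Definition is_similarity (Phi : seq V -> seq V -> V) : Prop :=
  [/\ is_lin2 Phi,
      (forall w, Phi [::] w = piV w) &
      (forall u w, (0 < size u)%N -> (size w <= 1)%N -> Phi u w = 0)].

Definition similar_fmul (F1 F2 : seq V -> seq V -> V) : Prop :=
  forall u (v : V), F1 u [:: v] = F2 u [:: v].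

Definition blk (u : seq V) (n : nat) (f : {ffun 'I_(size u) -> 'I_n})
  (j : 'I_n) : seq V :=
  [seq nth 0 u (nat_of_ord i) | i <- enum 'I_(size u) & f i == j].

(* Phi'(u (x) w) = sum_{n>=0} 1/n! Phi(xi_(1)) ... Phi(xi_(n)), with
   xi = u (x) w, as a formal linear combination of monomials of k[V].
   The n-fold iterated coproduct of u (x) w is the sum over all
   distributions f, g of the letters of u, w into n boxes of
   (x)_j (blk u f j (x) blk w g j).  Terms with n > size u + size w
   contain some factor Phi(1 (x) 1) = 0, hence vanish; they are omitted. *)
Definition Phi' (Phi : seq V -> seq V -> V) (u w : seq V) : seq (k * seq V) :=
  flatten [seq [seq ((n`!%:R)^-1,
                     [seq Phi (blk fg.1 j) (blk fg.2 j) | j <- enum 'I_n])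
               | fg <- enum {: {ffun 'I_(size u) -> 'I_n}
                              * {ffun 'I_(size w) -> 'I_n}}]
          | n <- iota 0 (size u + size w).+1].

Definition lin_ext (F : seq V -> seq V -> V) (u : seq V)
  (p : seq (k * seq V)) : V :=
  \sum_(x <- p) x.1 *: F u x.2.

(* sum F2(mu_(1) (x) Phi'(mu_(2) (x) nu)) for mu = u, nu = w monomials;
   Delta(v_1...v_n) = sum over subsets S of positions of v_S (x) v_{S^c}. *)
Definition compose (F2 Phi : seq V -> seq V -> V) (u w : seq V) : V :=
  \sum_(m : (size u).-tuple bool)
     lin_ext F2 (mask m u) (Phi' Phi (mask (map negb m) u) w).

End KV.

(* The equation F1(x, y) = F2(x, Phi(x, y)) can be solved for Phi by recursion
   on the total degree: in degree d, the right-hand side is Phi itself (the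
   term of the coproduct with x_(1) = 1 and a single factor Phi(x_(2), y), as
   F2(1, z) = pi_V(z)) plus terms involving Phi only in degrees < d.  The
   solution is bilinear and symmetric because composition with F2 preserves
   these properties, and unitality of F1 gives Phi(1, y) = pi_V(y).  When the
   second argument has degree <= 1, F2(x, Phi(x, y)) reduces to F2(x, y) as soon
   as Phi vanishes on k[V]_{>=1} (x) (k1 + V) in lower degrees; so, by induction
   on the degree, Phi vanishes there exactly when F1 and F2 agree on
   k[V] (x) (k1 + V), i.e. when they are similar. *)

From HB Require Import structures.
From mathcomp Require Import all_boot all_order all_algebra all_fingroup.
Set Implicit Arguments. Unset Strict Implicit. Unset Printing Implicit Defensive.
Import Order.TTheory GRing.Theory Num.Theory.
Local Open Scope ring_scope.

Section SeqFacts.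
Variables (T : Type) (x0 : T).

Lemma set_nth_size_cat (s1 s2 : seq T) y z :
  set_nth x0 (s1 ++ y :: s2) (size s1) z = s1 ++ z :: s2.
Proof. by elim: s1 => //= y1 s1 ->. Qed.

Lemma map_if_set_nth (I : eqType) (r : seq I) (i0 : I) (h : I -> T) y :
  uniq r -> i0 \in r ->
  [seq if i == i0 then y else h i | i <- r] = set_nth x0 (map h r) (index i0 r) y.
Proof.
elim: r => //= i1 r IH /andP [r'i1 ur]; rewrite in_cons eq_sym.
have [i0i1 _|_ /= r_i0] := eqVneq i0 i1; last by rewrite IH.
rewrite /=; congr (_ :: _); apply/eq_in_map => i ri.
by case: eqP => // ii0; rewrite -i0i1 -ii0 ri in r'i1.
Qed.

Lemma mask_map_filter (I : Type) (p : pred I) (g : I -> T) (r : seq I) :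
  mask (map p r) (map g r) = map g (filter p r).
Proof. by elim: r => //= i r ->; case: (p i). Qed.

Lemma count_take_lt (m : seq bool) i : (i < size m)%N -> nth false m i ->
  (count id (take i m) < count id m)%N.
Proof. by elim: m i => [|b m IH] [|i] //= lti mi; rewrite ?mi ?ltn_add2l ?IH. Qed.

Lemma mask_set_nth (m : seq bool) (s : seq T) i z : size m = size s -> (i < size s)%N ->
  mask m (set_nth x0 s i z) =
  if nth false m i then set_nth x0 (mask m s) (count id (take i m)) z else mask m s.
Proof.
elim: s m i => [|y s IH] [|b m] [|i] //= [ms] lti; first by case: b.
by rewrite IH //; case: b; case: (nth false m i).
Qed.

Lemma size_mask_negb n (s : seq T) (m : n.-tuple bool) :
  size s = n -> size (mask (map negb m) s) = count negb m.
Proof. by move=> sn; rewrite size_mask ?size_map ?size_tuple // count_map. Qed.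

Lemma count_negb_gt0 n (m : n.-tuple bool) :
  m != [tuple of nseq n true] -> (0 < count negb m)%N.
Proof.
rewrite -has_count; apply: contraR => /hasPn mT; apply/eqP/val_inj.
rewrite /= [in RHS](_ : n = size m); last by rewrite size_tuple.
by apply/all_pred1P/allP => b /mT; rewrite negbK /= eqb_id.
Qed.

Lemma count_negb_lt n (m : n.-tuple bool) :
  m != [tuple of nseq n false] -> (count negb m < n)%N.
Proof.
move=> mF; suff : (count negb m < size m)%N by rewrite size_tuple.
rewrite -(count_predC id).
change (count negb m < count id m + count negb m)%N.
rewrite -[X in (X < _)%N]add0n ltn_add2r -has_count; apply: contraR mF => /hasPn mF.
apply/eqP/val_inj; rewrite /= [in RHS](_ : n = size m); last by rewrite size_tuple.
by apply/all_pred1P/allP => b /mF /= /negbTE ->.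
Qed.

Lemma val_mktuple n (f : 'I_n -> T) : val (mktuple f) = map f (enum 'I_n).
Proof. by rewrite -[LHS]map_tnth_enum; apply/eq_map => i; rewrite tnth_mktuple. Qed.

Lemma map_nth_enum_ord N (s : seq T) :
  size s = N -> [seq nth x0 s (nat_of_ord i) | i <- enum 'I_N] = s.
Proof. by move=> <-; rewrite (map_comp (nth x0 s) val) val_enum_ord; exact: mkseq_nth. Qed.

Lemma index_enum_lt n (j : 'I_n) (s : seq T) :
  size s = n -> (index j (enum 'I_n) < size s)%N.
Proof. by move->; rewrite -[X in (_ < X)%N](size_enum_ord n) index_mem mem_enum. Qed.

Lemma perm_map_enum_ord N (s : {perm 'I_N}) : perm_eq (map s (enum 'I_N)) (enum 'I_N).
Proof.
apply: uniq_perm; rewrite ?(map_inj_uniq (@perm_inj _ s)) ?enum_uniq //.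
by move=> i; rewrite mem_enum; apply/mapP; exists (s^-1 i)%g; rewrite ?mem_enum ?permKV.
Qed.

Lemma perm_filter_map_perm N (s : {perm 'I_N}) (R : eqType) (G : 'I_N -> R) (P : pred 'I_N) :
  perm_eq [seq G (s i) | i <- enum 'I_N & P (s i)] [seq G i | i <- enum 'I_N & P i].
Proof.
by rewrite (map_comp G s) -(filter_map s P); apply/perm_map/perm_filter/perm_map_enum_ord.
Qed.

Lemma big_unique (R : nmodType) (I : finType) (i0 : I) (G : I -> R) :
  (forall i, i = i0) -> \sum_i G i = G i0.
Proof. by move=> all_i0; rewrite (big_pred1 i0) // => i; rewrite /= [i]all_i0 eqxx. Qed.

End SeqFacts.

Section Lin2.
Variables (k : fieldType) (V : lmodType k).
Implicit Types (F G : seq V -> seq V -> V) (u w a b : seq V).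

Lemma lin2_mem0 F u w : is_lin2 F -> (0 : V) \in w -> F u w = 0.
Proof.
case=> _ linr _ _ /splitPr [w1 w2].
have := linr u w1 w2 1 0 0; rewrite !scale1r addr0 => E.
by apply: (addrI (F u (w1 ++ 0 :: w2))); rewrite addr0 -E.
Qed.

Lemma eq_linear (h h' : V -> V) : h =1 h' -> linear h' -> linear h.
Proof. by move=> hh' linh c y1 y2; rewrite !hh' linh. Qed.

Lemma linear_sum_fun (I : Type) (r : seq I) (P : pred I) (h : I -> V -> V) :
  (forall i, P i -> linear (h i)) -> linear (fun z => \sum_(i <- r | P i) h i z).
Proof.
by move=> linh c y1 y2; rewrite scaler_sumr -big_split; apply: eq_bigr => i /linh ->.
Qed.

Lemma linear_scale_fun (c0 : k) (h : V -> V) : linear h -> linear (fun z => c0 *: h z).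
Proof. by move=> linh c y1 y2; rewrite linh scalerDr !scalerA mulrC. Qed.

Lemma lin2_set_nthl F T w q : is_lin2 F -> (q < size T)%N ->
  linear (fun z => F (set_nth 0 T q z) w).
Proof. by case=> linl _ _ _ ltq c y1 y2; rewrite !set_nthE ltq linl. Qed.

Lemma lin2_set_nthr F x T q : is_lin2 F -> (q < size T)%N ->
  linear (fun z => F x (set_nth 0 T q z)).
Proof. by case=> _ linr _ _ ltq c y1 y2; rewrite !set_nthE ltq linr. Qed.

Lemma lin2_sub F G : is_lin2 F -> is_lin2 G -> is_lin2 (fun a b => F a b - G a b).
Proof.
move=> [f1 f2 f3 f4] [g1 g2 g3 g4]; split.
- by move=> *; rewrite f1 g1 opprD addrACA scalerBr.
- by move=> *; rewrite f2 g2 opprD addrACA scalerBr.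
- by move=> u u' w uu'; rewrite (f3 _ _ _ uu') (g3 _ _ _ uu').
- by move=> u w w' ww'; rewrite (f4 _ _ _ ww') (g4 _ _ _ ww').
Qed.

Lemma lin2_by_degree G (H : nat -> seq V -> seq V -> V) :
  (forall L, is_lin2 (H L)) -> (forall a b, G a b = H (size a + size b)%N a b) ->
  is_lin2 G.
Proof.
move=> linH E; split.
- move=> u1 u2 w c y1 y2; rewrite !E !size_cat /=.
  by case: (linH (size u1 + (size u2).+1 + size w)%N) => + _ _ _; apply.
- move=> u w1 w2 c y1 y2; rewrite !E !size_cat /=.
  by case: (linH (size u + (size w1 + (size w2).+1))%N) => _ + _ _; apply.
- move=> u u' w uu'; rewrite !E (perm_size uu').
  by case: (linH (size u' + size w)%N) => _ _ + _; apply.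
- move=> u w w' ww'; rewrite !E (perm_size ww').
  by case: (linH (size u + size w')%N) => _ _ _ +; apply.
Qed.

Lemma lin2_piece F G L : is_lin2 F -> is_lin2 G ->
  is_lin2 (fun a b => if (size a + size b < L)%N then F a b
                      else if (size a + size b == L)%N then G a b else 0).
Proof.
move=> linF linG; apply: (lin2_by_degree (H := fun d a b =>
  if (d < L)%N then F a b else if d == L then G a b else 0)) => // d.
by case: ltnP => _; [|case: eqP => _; [|split=> *; rewrite ?scaler0 ?addr0]].
Qed.

End Lin2.

Section Coproduct.
Variables (k : fieldType) (V : lmodType k).
Implicit Types (F Phi Psi : seq V -> seq V -> V) (w a b x : seq V).

Definition block N a n (f : {ffun 'I_N -> 'I_n}) (j : 'I_n) : seq V :=
  [seq nth 0 a (nat_of_ord i) | i <- enum 'I_N & f i == j].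

Definition Phi_word Phi N M a w n (fg : {ffun 'I_N -> 'I_n} * {ffun 'I_M -> 'I_n}) :=
  [seq Phi (block a fg.1 j) (block w fg.2 j) | j <- enum 'I_n].

(* [lin_ext F x (Phi' Phi a w)], with the lengths [N], [M] of [a], [w] made
   independent parameters, so that letters of [a] and [w] can be replaced or
   permuted without changing the index types. *)
Definition apply_Phi' F Phi x N M a w : V :=
  \sum_(n < (N + M).+1) \sum_(fg : {ffun 'I_N -> 'I_n} * {ffun 'I_M -> 'I_n})
     (n`!%:R)^-1 *: F x (Phi_word Phi a w fg).

Lemma lin_ext_Phi'E F Phi x a w :
  lin_ext F x (Phi' Phi a w) = apply_Phi' F Phi x (size a) (size w) a w.
Proof.
rewrite /lin_ext /Phi' big_flatten big_map -val_enum_ord big_map big_enum /=.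
by apply: eq_bigr => n _; rewrite big_map big_enum.
Qed.

Lemma size_block N a n (f : {ffun 'I_N -> 'I_n}) j :
  size (block a f j) = count (fun i => f i == j) (enum 'I_N).
Proof. by rewrite size_map size_filter. Qed.

Lemma size_block_le N a n (f : {ffun 'I_N -> 'I_n}) j : (size (block a f j) <= N)%N.
Proof. by rewrite size_block (leq_trans (count_size _ _)) ?size_enum_ord. Qed.

Lemma size_block_gt0 N a n (f : {ffun 'I_N -> 'I_n}) i : (0 < size (block a f (f i)))%N.
Proof. by rewrite size_block -has_count; apply/hasP; exists i; rewrite ?mem_enum. Qed.

Lemma block_const N a n (f : {ffun 'I_N -> 'I_n}) j :
  size a = N -> (forall i, f i = j) -> block a f j = a.
Proof.
move=> Na fj; rewrite /block (eq_filter (a2 := predT)) ?filter_predT ?map_nth_enum_ord //.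
by move=> i; rewrite fj eqxx.
Qed.

Lemma block_ord0 n a (f : {ffun 'I_0 -> 'I_n}) j : block a f j = [::].
Proof. by rewrite /block enum_ord0. Qed.

Lemma size_Phi_word Phi N M a w n (fg : {ffun 'I_N -> 'I_n} * {ffun 'I_M -> 'I_n}) :
  size (Phi_word Phi a w fg) = n.
Proof. by rewrite size_map size_enum_ord. Qed.

Lemma apply_Phi'_eq0 F Phi x N M a w : is_lin2 F ->
  (forall n (fg : {ffun 'I_N -> 'I_n} * {ffun 'I_M -> 'I_n}),
     exists j, Phi (block a fg.1 j) (block w fg.2 j) = 0) ->
  apply_Phi' F Phi x N M a w = 0.
Proof.
move=> linF Phi0; rewrite /apply_Phi' big1 // => n _; rewrite big1 // => fg _.
have [j Phij] := Phi0 n fg; rewrite (lin2_mem0 _ linF) ?scaler0 //.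
by rewrite -Phij; apply/mapP; exists j; rewrite ?mem_enum.
Qed.

Lemma apply_Phi'00 F Phi x : apply_Phi' F Phi x 0 0 [::] [::] = F x [::].
Proof.
rewrite /apply_Phi' big_ord1 (big_unique (i0 := ([ffun i => i], [ffun i => i]))).
  by rewrite /Phi_word enum_ord0 /= invr1 scale1r.
by case=> f g; congr pair; apply/ffunP => -[].
Qed.

Lemma apply_Phi'01 F Phi x v :
  apply_Phi' F Phi x 0 1 [::] [:: v] = F x [:: Phi [::] [:: v]].
Proof.
rewrite /apply_Phi' big_ord_recr big_ord1 /= big1 ?add0r; last by case=> f g; case: (g ord0).
rewrite (big_unique (i0 := ([ffun => ord0], [ffun => ord0]))); last first.
  by case=> f g; congr pair; apply/ffunP => i; [case: i | rewrite !ord1].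
rewrite /Phi_word enum_ordSl enum_ord0 /= block_ord0 block_const ?invr1 ?scale1r //.
by move=> i; rewrite ffunE.
Qed.

Lemma apply_Phi'_unital F Phi N M a w :
  size a = N -> size w = M -> (0 < N + M)%N -> (forall s, F [::] s = piV s) ->
  apply_Phi' F Phi [::] N M a w = Phi a w.
Proof.
move=> Na Mw NM0 F_nil.
rewrite /apply_Phi' (bigD1 (Ordinal (_ : 1 < (N + M).+1)%N)) ?ltnS //= [X in _ + X]big1 ?addr0.
  rewrite (big_unique (i0 := ([ffun => ord0], [ffun => ord0]))); last first.
    by case=> f g; congr pair; apply/ffunP => i; rewrite !ord1.
  rewrite /Phi_word enum_ordSl enum_ord0 /= !block_const // => [|i|i]; [|by rewrite ffunE..].
  by rewrite F_nil factS fact0 invr1 scale1r.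
move=> n n_neq1; rewrite big1 // => fg _; rewrite F_nil.
move: (size_Phi_word Phi a w fg).
case: (Phi_word Phi a w fg) => [|y [|? ?]] /= n1; rewrite ?scaler0 //.
by case/eqP: n_neq1; apply: val_inj; rewrite /= -n1.
Qed.

Lemma eq_apply_Phi' F Phi Psi x N M a w :
  (forall a' b, (size a' + size b <= N + M)%N -> Phi a' b = Psi a' b) ->
  apply_Phi' F Phi x N M a w = apply_Phi' F Psi x N M a w.
Proof.
move=> PhiPsi; apply: eq_bigr => n _; apply: eq_bigr => fg _.
by congr (_ *: F x _); apply: eq_map => j; rewrite PhiPsi ?leq_add ?size_block_le.
Qed.

End Coproduct.

Section Compose.
Variables (k : fieldType) (V : lmodType k).
Implicit Types (F Phi Psi : seq V -> seq V -> V) (u w a b : seq V).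

Lemma composeE F Phi N u w : size u = N ->
  compose F Phi u w =
  \sum_(m : N.-tuple bool) lin_ext F (mask m u) (Phi' Phi (mask (map negb m) u) w).
Proof. by move=> <-. Qed.

Lemma compose_nil F Phi w :
  compose F Phi [::] w = apply_Phi' F Phi [::] 0 (size w) [::] w.
Proof.
by rewrite /compose (big_unique (i0 := [tuple])) => [|m]; rewrite ?tuple0 // lin_ext_Phi'E.
Qed.

Lemma compose_nil_nil F Phi : compose F Phi [::] [::] = F [::] [::].
Proof. by rewrite compose_nil apply_Phi'00. Qed.

Lemma compose_nil_unital F Phi w : w != [::] -> (forall s, F [::] s = piV s) ->
  compose F Phi [::] w = Phi [::] w.
Proof. by move=> w0 F_nil; rewrite compose_nil apply_Phi'_unital // lt0n size_eq0. Qed.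

Lemma compose_le1 F Phi u w : is_lin2 F -> (size w <= 1)%N ->
  (forall b, (size b <= size w)%N -> Phi [::] b = piV b) ->
  (forall a b, (0 < size a)%N -> (size b <= size w)%N -> Phi a b = 0) ->
  compose F Phi u w = F u w.
Proof.
move=> linF w1 Phi_nil Phi0.
rewrite /compose (bigD1 [tuple of nseq (size u) true]) //= [X in _ + X]big1 ?addr0.
  rewrite map_nseq mask_false mask_true // lin_ext_Phi'E /=.
  case: w w1 Phi_nil {Phi0} => [|v [|//]] _ Phi_nil; first exact: apply_Phi'00.
  by rewrite apply_Phi'01 Phi_nil.
move=> m mT; rewrite lin_ext_Phi'E; apply: apply_Phi'_eq0 => // n fg.
have a0 : (0 < size (mask (map negb m) u))%N by rewrite size_mask_negb ?count_negb_gt0.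
exists (fg.1 (Ordinal a0)); apply: Phi0; first exact: size_block_gt0.
exact: size_block_le.
Qed.

Lemma compose_subr_lower F Phi Psi u w :
  (0 < size u + size w)%N -> (forall s, F [::] s = piV s) ->
  (forall a b, (size a + size b < size u + size w)%N -> Phi a b = Psi a b) ->
  compose F Phi u w - Phi u w = compose F Psi u w - Psi u w.
Proof.
move=> uw0 F_nil PhiPsi; rewrite /compose; set m0 := [tuple of nseq (size u) false].
rewrite (bigD1 m0) // [in RHS](bigD1 m0) //=.
rewrite map_nseq mask_false mask_true // !lin_ext_Phi'E !apply_Phi'_unital //.
rewrite [LHS]addrAC [RHS]addrAC !subrr !add0r; apply: eq_bigr => m mF.
rewrite !lin_ext_Phi'E; apply: eq_apply_Phi' => a b ab; apply: PhiPsi.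
by rewrite (leq_ltn_trans ab) // ltn_add2r size_mask_negb ?count_negb_lt.
Qed.

End Compose.

Section ComposeLin2.
Variables (k : fieldType) (V : lmodType k).
Implicit Types (F Phi : seq V -> seq V -> V) (u w a x : seq V).

Lemma block_set_nth N a n (f : {ffun 'I_N -> 'I_n}) (i0 : 'I_N) z j :
  block (set_nth 0 a i0 z) f j =
  if j == f i0 then set_nth 0 (block a f j) (index i0 [seq i <- enum 'I_N | f i == j]) z
  else block a f j.
Proof.
rewrite /block; under eq_map => i do rewrite nth_set_nth /=.
case: ifP => [/eqP fi0|/eqP fi0].
  rewrite -map_if_set_nth //; last by rewrite mem_filter fi0 eqxx mem_enum.
  by rewrite filter_uniq // enum_uniq.
apply/eq_in_map => i; rewrite mem_filter => /andP [/eqP fi _].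
by case: eqP => // /val_inj ii0; case: fi0; rewrite -ii0.
Qed.

Lemma index_block_lt N a n (f : {ffun 'I_N -> 'I_n}) (i0 : 'I_N) :
  (index i0 [seq i <- enum 'I_N | f i == f i0] < size (block a f (f i0)))%N.
Proof. by rewrite size_map index_mem mem_filter eqxx mem_enum. Qed.

Lemma Phi_word_set_nthl Phi N M a w n (fg : {ffun 'I_N -> 'I_n} * {ffun 'I_M -> 'I_n})
    (i0 : 'I_N) z :
  Phi_word Phi (set_nth 0 a i0 z) w fg =
  set_nth 0 (Phi_word Phi a w fg) (index (fg.1 i0) (enum 'I_n))
    (Phi (set_nth 0 (block a fg.1 (fg.1 i0))
                  (index i0 [seq i <- enum 'I_N | fg.1 i == fg.1 i0]) z)
         (block w fg.2 (fg.1 i0))).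
Proof.
rewrite /Phi_word -map_if_set_nth ?enum_uniq ?mem_enum //; apply/eq_map => j /=.
by rewrite block_set_nth; case: eqP => // ->.
Qed.

Lemma Phi_word_set_nthr Phi N M a w n (fg : {ffun 'I_N -> 'I_n} * {ffun 'I_M -> 'I_n})
    (i0 : 'I_M) z :
  Phi_word Phi a (set_nth 0 w i0 z) fg =
  set_nth 0 (Phi_word Phi a w fg) (index (fg.2 i0) (enum 'I_n))
    (Phi (block a fg.1 (fg.2 i0))
         (set_nth 0 (block w fg.2 (fg.2 i0))
                  (index i0 [seq i <- enum 'I_M | fg.2 i == fg.2 i0]) z)).
Proof.
rewrite /Phi_word -map_if_set_nth ?enum_uniq ?mem_enum //; apply/eq_map => j /=.
by rewrite block_set_nth; case: eqP => // ->.
Qed.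

Lemma apply_Phi'_linl F Phi x N M a w (i0 : 'I_N) : is_lin2 F -> is_lin2 Phi ->
  linear (fun z => apply_Phi' F Phi x N M (set_nth 0 a i0 z) w).
Proof.
move=> linF linP; apply: linear_sum_fun => n _; apply: linear_sum_fun => fg _.
apply: linear_scale_fun => c y1 y2; rewrite !Phi_word_set_nthl.
rewrite (lin2_set_nthl _ linP (index_block_lt _ _ _)).
by rewrite (lin2_set_nthr _ linF (index_enum_lt _ (size_Phi_word _ _ _ _))).
Qed.

Lemma apply_Phi'_linr F Phi x N M a w (i0 : 'I_M) : is_lin2 F -> is_lin2 Phi ->
  linear (fun z => apply_Phi' F Phi x N M a (set_nth 0 w i0 z)).
Proof.
move=> linF linP; apply: linear_sum_fun => n _; apply: linear_sum_fun => fg _.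
apply: linear_scale_fun => c y1 y2; rewrite !Phi_word_set_nthr.
rewrite (lin2_set_nthr _ linP (index_block_lt _ _ _)).
by rewrite (lin2_set_nthr _ linF (index_enum_lt _ (size_Phi_word _ _ _ _))).
Qed.

Lemma block_perm N a n (f : {ffun 'I_N -> 'I_n}) (s : {perm 'I_N}) j :
  perm_eq (block [seq nth 0 a (nat_of_ord (s i)) | i <- enum 'I_N] [ffun i => f (s i)] j)
          (block a f j).
Proof.
rewrite /block; under eq_map => i do rewrite (nth_map i) ?size_enum_ord // nth_ord_enum.
rewrite (eq_filter (a2 := fun i => f (s i) == j)) => [|i]; last by rewrite ffunE.
exact: (perm_filter_map_perm s (fun i => nth 0 a i) (fun i => f i == j)).
Qed.

Lemma apply_Phi'_perml F Phi x N M a w (s : {perm 'I_N}) : is_lin2 Phi ->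
  apply_Phi' F Phi x N M [seq nth 0 a (nat_of_ord (s i)) | i <- enum 'I_N] w =
  apply_Phi' F Phi x N M a w.
Proof.
case=> _ _ symP _; apply: eq_bigr => n _.
rewrite (reindex_inj (h := fun fg : {ffun 'I_N -> 'I_n} * {ffun 'I_M -> 'I_n} =>
   ([ffun i => fg.1 (s i)], fg.2))) /=; last first.
  move=> [f g] [f' g'] /= [/ffunP ff' ->]; congr pair; apply/ffunP => i.
  by have := ff' (s^-1 i)%g; rewrite !ffunE permKV.
apply: eq_bigr => fg _; congr (_ *: F x _); apply/eq_map => j /=.
exact/symP/block_perm.
Qed.

Lemma apply_Phi'_permr F Phi x N M a w (s : {perm 'I_M}) : is_lin2 Phi ->
  apply_Phi' F Phi x N M a [seq nth 0 w (nat_of_ord (s i)) | i <- enum 'I_M] =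
  apply_Phi' F Phi x N M a w.
Proof.
case=> _ _ _ symP; apply: eq_bigr => n _.
rewrite (reindex_inj (h := fun fg : {ffun 'I_N -> 'I_n} * {ffun 'I_M -> 'I_n} =>
   (fg.1, [ffun i => fg.2 (s i)]))) /=; last first.
  move=> [f g] [f' g'] /= [-> /ffunP gg']; congr pair; apply/ffunP => i.
  by have := gg' (s^-1 i)%g; rewrite !ffunE permKV.
apply: eq_bigr => fg _; congr (_ *: F x _); apply/eq_map => j /=.
exact/symP/block_perm.
Qed.

Lemma perm_eq_nth_perm a a' : perm_eq a' a ->
  exists s : {perm 'I_(size a)},
    a' = [seq nth 0 a (nat_of_ord (s i)) | i <- enum 'I_(size a)].
Proof.
move=> a'a; have /tuple_permP [s ->] : perm_eq a' (in_tuple a) by [].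
by exists s; rewrite -map_tnth_enum; apply/eq_map => i; rewrite tnth_mktuple (tnth_nth 0).
Qed.

Lemma lin_ext_Phi'_perml F Phi x a a' w : is_lin2 Phi -> perm_eq a' a ->
  lin_ext F x (Phi' Phi a' w) = lin_ext F x (Phi' Phi a w).
Proof.
move=> linP a'a; rewrite !lin_ext_Phi'E (perm_size a'a).
by have [s ->] := perm_eq_nth_perm a'a; apply: apply_Phi'_perml.
Qed.

Lemma lin_ext_Phi'_permr F Phi x a w w' : is_lin2 Phi -> perm_eq w' w ->
  lin_ext F x (Phi' Phi a w') = lin_ext F x (Phi' Phi a w).
Proof.
move=> linP w'w; rewrite !lin_ext_Phi'E (perm_size w'w).
by have [s ->] := perm_eq_nth_perm w'w; apply: apply_Phi'_permr.
Qed.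

Lemma lin_ext_perm F x x' p : is_lin2 F -> perm_eq x x' -> lin_ext F x p = lin_ext F x' p.
Proof. by case=> _ _ symF _ xx'; apply: eq_bigr => e _; rewrite (symF _ _ _ xx'). Qed.

Lemma mask_perm N (s : {perm 'I_N}) (p : pred 'I_N) u : size u = N ->
  perm_eq (mask [seq p (s i) | i <- enum 'I_N] [seq nth 0 u (nat_of_ord (s i)) | i <- enum 'I_N])
          (mask [seq p i | i <- enum 'I_N] u).
Proof.
move=> uN; rewrite (mask_map_filter (fun i => p (s i))) -[X in mask _ X](map_nth_enum_ord 0 uN).
by rewrite mask_map_filter (perm_filter_map_perm s (fun i : 'I_N => nth 0 u i)).
Qed.

Lemma compose_perml F Phi u u' w : is_lin2 F -> is_lin2 Phi -> perm_eq u' u ->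
  compose F Phi u' w = compose F Phi u w.
Proof.
move=> linF linP u'u; rewrite (composeE _ _ _ (perm_size u'u)) /compose.
have [s ->] := perm_eq_nth_perm u'u.
rewrite (reindex_inj (h := fun m : (size u).-tuple bool => [tuple tnth m (s i) | i < size u])).
  apply: eq_bigr => m _; rewrite val_mktuple -map_comp.
  rewrite (lin_ext_Phi'_perml _ _ _ linP (mask_perm s (fun i => ~~ tnth m i) (erefl _))).
  rewrite (lin_ext_perm _ linF (mask_perm s (tnth m) (erefl _))) /=.
  by rewrite -[in RHS](map_tnth_enum m) -(map_comp negb (tnth m)).
move=> m m' mm'; apply: eq_from_tnth => i.
by have := congr1 (fun t => tnth t (s^-1 i)%g) mm'; rewrite /= !tnth_mktuple permKV.
Qed.

Lemma compose_permr F Phi u w w' : is_lin2 Phi -> perm_eq w' w ->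
  compose F Phi u w' = compose F Phi u w.
Proof. by move=> linP w'w; apply: eq_bigr => m _; apply: lin_ext_Phi'_permr. Qed.

Lemma compose_linl F Phi u w i : is_lin2 F -> is_lin2 Phi -> (i < size u)%N ->
  linear (fun z => compose F Phi (set_nth 0 u i z) w).
Proof.
move=> linF linP ltiu.
apply: (eq_linear (h' := fun z => \sum_(m : (size u).-tuple bool)
  lin_ext F (mask m (set_nth 0 u i z)) (Phi' Phi (mask (map negb m) (set_nth 0 u i z)) w))).
  by move=> z; rewrite (composeE _ _ _ (_ : _ = size u)) // size_set_nth (maxn_idPr ltiu).
apply: linear_sum_fun => m _.
have sm : size m = size u by rewrite size_tuple.
have snm : size (map negb m) = size u by rewrite size_map.
case mi: (nth false m i).
  apply: (eq_linear (h' := fun z => lin_ext F (set_nth 0 (mask m u) (count id (take i m)) z)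
                                    (Phi' Phi (mask (map negb m) u) w))).
    by move=> z; rewrite !mask_set_nth // mi (nth_map false) ?sm // mi.
  apply: linear_sum_fun => e _; apply: linear_scale_fun; apply: lin2_set_nthl => //.
  by rewrite size_mask // count_take_lt // sm.
set a := mask (map negb m) u.
have lt_a : (count id (take i (map negb m)) < size a)%N.
  by rewrite size_mask // count_take_lt ?snm // (nth_map false) ?sm // mi.
apply: (eq_linear (h' := fun z =>
  apply_Phi' F Phi (mask m u) (size a) (size w) (set_nth 0 a (Ordinal lt_a) z) w)).
  move=> z; rewrite !mask_set_nth // mi (nth_map false) ?sm // mi /= lin_ext_Phi'E.
  by rewrite size_set_nth (maxn_idPr lt_a).
exact: apply_Phi'_linl.
Qed.

Lemma compose_linr F Phi u w i : is_lin2 F -> is_lin2 Phi -> (i < size w)%N ->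
  linear (fun z => compose F Phi u (set_nth 0 w i z)).
Proof.
move=> linF linP ltiw; apply: linear_sum_fun => m _.
apply: (eq_linear (h' := fun z => apply_Phi' F Phi (mask m u) (size (mask (map negb m) u))
                                   (size w) (mask (map negb m) u) (set_nth 0 w (Ordinal ltiw) z))).
  by move=> z; rewrite lin_ext_Phi'E size_set_nth (maxn_idPr ltiw).
exact: apply_Phi'_linr.
Qed.

Lemma lin2_compose F Phi : is_lin2 F -> is_lin2 Phi -> is_lin2 (compose F Phi).
Proof.
move=> linF linP; split.
- move=> u1 u2 w c y1 y2.
  have lt : (size u1 < size (u1 ++ 0%R :: u2))%N by rewrite size_cat addnS ltnS leq_addr.
  by have := compose_linl w linF linP lt c y1 y2; rewrite !set_nth_size_cat.
- move=> u w1 w2 c y1 y2.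
  have lt : (size w1 < size (w1 ++ 0%R :: w2))%N by rewrite size_cat addnS ltnS leq_addr.
  by have := compose_linr u linF linP lt c y1 y2; rewrite !set_nth_size_cat.
- by move=> u u' w uu'; rewrite (compose_perml _ linF linP uu').
- by move=> u w w' ww'; rewrite (compose_permr _ _ linP ww').
Qed.

End ComposeLin2.

Section Similarity.
Variables (k : fieldType) (V : lmodType k) (F1 F2 : seq V -> seq V -> V).
Hypotheses (hF1 : unital_fmul F1) (hF2 : unital_fmul F2).
Implicit Types (u w a b : seq V).

Let F1_mul1 u : F1 u [::] = piV u := (hF1.2 u).1.
Let F1_1mul u : F1 [::] u = piV u := (hF1.2 u).2.
Let F2_mul1 u : F2 u [::] = piV u := (hF2.2 u).1.
Let F2_1mul u : F2 [::] u = piV u := (hF2.2 u).2.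

(* [Phi_trunc L] is [Phi_of] truncated to total degree [< L].  Its degree-[L]
   part is forced by [F1 = compose F2 Phi_of], since the degree-[L] part of
   [compose F2 Phi] is [Phi] plus terms involving [Phi] only in lower degrees. *)
Fixpoint Phi_trunc L : seq V -> seq V -> V :=
  if L is L'.+1 then fun a b =>
    if (size a + size b < L')%N then Phi_trunc L' a b
    else if (size a + size b == L')%N then F1 a b - compose F2 (Phi_trunc L') a b
    else 0
  else fun _ _ => 0.

Definition Phi_of a b := Phi_trunc (size a + size b).+1 a b.

Lemma Phi_trunc_ge L a b : (L <= size a + size b)%N -> Phi_trunc L a b = 0.
Proof. by case: L => //= L ltL; rewrite ltnNge (ltnW ltL) gtn_eqF. Qed.

Lemma Phi_trunc_lt L a b : (size a + size b < L)%N -> Phi_trunc L a b = Phi_of a b.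
Proof.
elim: L => // L IH; rewrite ltnS leq_eqVlt => /predU1P [<- //|ltL].
by rewrite /= ltL IH.
Qed.

Lemma Phi_ofE a b : Phi_of a b = F1 a b - compose F2 (Phi_trunc (size a + size b)) a b.
Proof. by rewrite /Phi_of /= ltnn eqxx. Qed.

Lemma lin2_Phi_trunc L : is_lin2 (Phi_trunc L).
Proof.
elim: L => [|L IH]; first by split=> *; rewrite ?scaler0 ?addr0.
exact: lin2_piece IH (lin2_sub hF1.1 (lin2_compose hF2.1 IH)).
Qed.

Lemma lin2_Phi_of : is_lin2 Phi_of.
Proof. exact: (lin2_by_degree (fun L => lin2_Phi_trunc L.+1)). Qed.

Lemma compose_Phi_trunc u w : (0 < size u + size w)%N ->
  compose F2 (Phi_trunc (size u + size w)) u w = compose F2 Phi_of u w - Phi_of u w.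
Proof.
move=> uw0; transitivity (compose F2 (Phi_trunc (size u + size w)) u w
                          - Phi_trunc (size u + size w) u w).
  by rewrite Phi_trunc_ge ?subr0.
by apply: compose_subr_lower uw0 F2_1mul _ => a b; apply: Phi_trunc_lt.
Qed.

Lemma compose_Phi_of u w : F1 u w = compose F2 Phi_of u w.
Proof.
have [/eqP|uw0] := posnP (size u + size w).
  rewrite addn_eq0 => /andP [/eqP/size0nil -> /eqP/size0nil ->].
  by rewrite compose_nil_nil F1_mul1 F2_mul1.
have /addrI : Phi_of u w + 0 = Phi_of u w + (F1 u w - compose F2 Phi_of u w).
  by rewrite addr0 {1}Phi_ofE compose_Phi_trunc // opprB addrCA.
by move/esym/subr0_eq.
Qed.

Lemma Phi_of_nil w : Phi_of [::] w = piV w.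
Proof.
have [->|w0] := eqVneq w [::].
  by rewrite Phi_ofE compose_nil_nil F1_mul1 F2_mul1 subrr.
by rewrite -(compose_nil_unital Phi_of w0 F2_1mul) -compose_Phi_of F1_1mul.
Qed.

Lemma Phi_of_eq0 : similar_fmul F1 F2 ->
  forall u w, (0 < size u)%N -> (size w <= 1)%N -> Phi_of u w = 0.
Proof.
move=> sim12 u w; move Ed: (size u + size w)%N => d.
elim/ltn_ind: d u w Ed => d IH u w Ed u0 w1.
rewrite Phi_ofE Ed compose_le1 //.
- case: w {Ed} w1 => [|v [|//]] _; last by rewrite sim12 subrr.
  by rewrite F1_mul1 F2_mul1 subrr.
- exact: hF2.1.
- by move=> b wb; rewrite Phi_trunc_lt ?Phi_of_nil // -Ed; exact: leq_add u0 wb.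
move=> a b a0 wb; have [ab_lt|ab_ge] := ltnP (size a + size b) d.
  by rewrite Phi_trunc_lt // (IH _ ab_lt) // (leq_trans wb).
exact: Phi_trunc_ge.
Qed.

End Similarity.

Unset Implicit Arguments.

Theorem mainTheorem5 (k : fieldType) (char0 : [pchar k] =i pred0)
  (V : lmodType k) (F1 F2 : seq V -> seq V -> V)
  (hF1 : unital_fmul F1) (hF2 : unital_fmul F2) :
  similar_fmul F1 F2 <->
  exists Phi : seq V -> seq V -> V,
    is_similarity Phi /\
    forall u w : seq V, F1 u w = compose F2 Phi u w.
Proof.
split=> [sim12 | [Phi [[linP Phi_nil Phi0] F1E]] u v].
  exists (Phi_of F1 F2); split; last exact: compose_Phi_of.
  split; [exact: lin2_Phi_of | exact: Phi_of_nil | exact: Phi_of_eq0].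
by rewrite F1E compose_le1 //; exact: hF2.1.
Qed.
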